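(* Let $k=2^{\ell}$ for an integer $\ell\ge 2$ and let $q=4k$. Let $a,b\in\mathfrak S_q$ be the permutations $$a=(c_0,c_1)(c_2,c_3)\cdots(c_{4k-2},c_{4k-1}),$$ and $b=C_1C_2$, where $C_1$ and $C_2$ are the following two disjoint $2k$-cycles: - $C_1$ is the cycle whose entries, in order, are: for $m=0,1,\dots,\frac{k-2}{2}$ successively the pair $c_{2m},\,c_{2(2m+k-1)}$; then for $n=0,1,\dots,\frac{k-4}{2}$ successively the pair $c_{2n+k},\,c_{2(2n+k)}$; and finally $c_{4k-1},\,c_{4k-4}$. That is, $C_1=(c_0,c_{2k-2},c_2,c_{2k+2},\dots,c_{k-2},c_{4k-6},c_k,c_{2k},c_{k+2},c_{2k+4},\dots,c_{2k-4},c_{4k-8},c_{4k-1},c_{4k-4})$. - $C_2$ is the cycle whose entries, in order, are: for $m=0,1,\dots,\frac{k-2}{2}$ successively the pair $c_{2m+1},\,c_{2(2m+k)+1}$; then for $n=0,1,\dots,\frac{k-4}{2}$ successively the pair $c_{2n+k+1},\,c_{2(2n+k)-1}$; and finally $c_{4k-2},\,c_{4k-5}$. That is, $C_2=(c_1,c_{2k+1},c_3,c_{2k+5},\dots,c_{k-1},c_{4k-3},c_{k+1},c_{2k-1},c_{k+3},c_{2k+3},\dots,c_{2k-3},c_{4k-9},c_{4k-2},c_{4k-5})$. Then $G_1=\{b^{j}a^{i}: 0\le j\le 2k-1,\ 0\le i\le 1\}$ is a subgroup of $\mathfrak S_q$ with $|G_1|=q$, and no element of $G_1$ other than the identity has a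 fixed point.
   Context: $q$ is a prime power and the elements of the finite field $\mathbb F_q$ are enumerated once and for all as $\mathbb F_q=\{c_0,c_1,\dots,c_{q-1}\}$. $\mathfrak S_q$ denotes the symmetric group of all permutations of $\mathbb F_q$; products of permutations are compositions applied right to left, $(\sigma\tau)(x)=\sigma(\tau(x))$, and permutations are written in cycle notation. *)

From HB Require Import structures.
From mathcomp Require Import all_boot all_order all_algebra all_fingroup all_field.
Set Implicit Arguments. Unset Strict Implicit. Unset Printing Implicit Defensive.
Import GRing.Theory.

(* The map underlying the cycle (s_0, s_1, ..., s_{n-1}):
   s_i |-> s_{i+1 mod n}, and every x not in s is fixed. *)
Definition cycle_fun (T : finType) (s : seq T) (x : T) : T :=
  nth x (rot 1 s) (index x s).

(* The cyclic permutation written in cycle notation by the list s.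
   (For a duplicate-free list s, cycle_fun s is injective; if not injective
   we return the identity, which never happens for the lists used below.) *)
Definition cycle_perm (T : finType) (s : seq T) : {perm T} :=
  match injectiveP (cycle_fun s) with
  | ReflectT h => perm h
  | ReflectF _ => 1%g
  end.

Section Thm3p1.
Variable F : finFieldType.
(* enumeration F_q = {c_0, ..., c_{q-1}}, given as a sequence cs *)
Variable cs : seq F.
Variable k : nat.

Definition cc (i : nat) : F := nth 0%R cs i.

Definition perm_a : {perm F} :=
  (\prod_(i < 2 * k) cycle_perm [:: cc (2 * i); cc (2 * i).+1])%g.

Definition C1_idx : seq nat :=
  flatten [seq [:: 2 * m; 2 * (2 * m + k - 1)] | m <- iota 0 k./2]
  ++ flatten [seq [:: 2 * n + k; 2 * (2 * n + k)] | n <- iota 0 (k./2 - 1)]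
  ++ [:: 4 * k - 1; 4 * k - 4].

Definition C2_idx : seq nat :=
  flatten [seq [:: 2 * m + 1; 2 * (2 * m + k) + 1] | m <- iota 0 k./2]
  ++ flatten [seq [:: 2 * n + k + 1; 2 * (2 * n + k) - 1] | n <- iota 0 (k./2 - 1)]
  ++ [:: 4 * k - 2; 4 * k - 5].

Definition perm_C1 : {perm F} := cycle_perm (map cc C1_idx).
Definition perm_C2 : {perm F} := cycle_perm (map cc C2_idx).

Definition perm_b : {perm F} := (perm_C1 * perm_C2)%g.

(* G1 = { b^j a^i : 0 <= j <= 2k-1, 0 <= i <= 1 }.  MathComp composes
   permutations left to right ((s * t) x = t (s x)), so the paper's b^j a^i
   (apply a^i first) is a^i * b^j here. *)
Definition G1 : {set {perm F}} :=
  [set (perm_a ^+ i * perm_b ^+ j)%g | i : 'I_2, j : 'I_(2 * k)].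
End Thm3p1.

From mathcomp Require Import all_boot all_algebra all_fingroup.
From mathcomp Require Import zify.

Set Implicit Arguments. Unset Strict Implicit.

(* Label the points of F by bool * Z/2k: the r-th entry of C1 is (false, r) and
   the r-th entry of C2 is (true, r).  In these coordinates b is the shift
   (s, r) |-> (s, r + 1), and a is (s, r) |-> (~~ s, (k + 1) r): the explicit
   entries of C1 and C2 are arranged precisely so that each pair
   {c_(2m), c_(2m+1)} swapped by a consists of two such labels.  As
   (k + 1)^2 = 1 mod 2k for even k, we get a^2 = b^(2k) = 1 and
   b a = a b^(k+1), so the products a^e b^j form a group; it acts simply
   transitively on the 4k labels, because a^e b^j maps (s, r) to
   (s xor e, (k + 1)^e r + j). *)

Section CyclePerm.
Variable T : finType.

Lemma cycle_fun_nth (s : seq T) d r : uniq s -> r < size s ->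
  cycle_fun s (nth d s r) = nth d s (r.+1 %% size s).
Proof.
move=> us rs; rewrite /cycle_fun index_uniq //.
case: s us rs => [//|x s] _ rs; rewrite rot1_cons nth_rcons /=.
case: ltngtP => r_s.
- by rewrite modn_small // (set_nth_default d).
- by move: rs; rewrite /=; lia.
- by rewrite r_s modnn.
Qed.

Lemma cycle_fun_notin (s : seq T) x : x \notin s -> cycle_fun s x = x.
Proof. by move=> xs; rewrite /cycle_fun memNindex // nth_default // size_rot. Qed.

Lemma cycle_fun_inj (s : seq T) : uniq s -> injective (cycle_fun s).
Proof.
move=> us x y.
have sz_gt0 z : z \in s -> 0 < size s by case: (s).
have cfE z : z \in s -> cycle_fun s z = nth x s ((index z s).+1 %% size s).
  by move=> zs; rewrite -{1}(nth_index x zs) cycle_fun_nth ?index_mem.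
have cf_mem z : z \in s -> cycle_fun s z \in s.
  by move=> zs; rewrite cfE // mem_nth // ltn_pmod // (sz_gt0 z).
case: (boolP (x \in s)) => xs; case: (boolP (y \in s)) => ys.
- rewrite !cfE // => /eqP; rewrite nth_uniq ?ltn_pmod ?(sz_gt0 x) // => /eqP.
  rewrite -addn1 -[in RHS]addn1 => /eqP; rewrite eqn_modDr !modn_small ?index_mem //.
  by move=> /eqP /(congr1 (nth x s)); rewrite !nth_index.
- by move=> e; move: (cf_mem x xs); rewrite e cycle_fun_notin // (negbTE ys).
- by move=> e; move: (cf_mem y ys); rewrite -e cycle_fun_notin // (negbTE xs).
- by rewrite !cycle_fun_notin.
Qed.

Lemma cycle_permE (s : seq T) : uniq s -> cycle_perm s =1 cycle_fun s.
Proof.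
move=> us x; rewrite /cycle_perm; case: injectiveP => [cf_inj | []].
  by rewrite permE.
exact: cycle_fun_inj.
Qed.

Lemma cycle_perm_nth (s : seq T) d r : uniq s -> r < size s ->
  cycle_perm s (nth d s r) = nth d s (r.+1 %% size s).
Proof. by move=> us rs; rewrite cycle_permE // cycle_fun_nth. Qed.

Lemma cycle_perm_notin (s : seq T) x : uniq s -> x \notin s -> cycle_perm s x = x.
Proof. by move=> us xs; rewrite cycle_permE // cycle_fun_notin. Qed.

Lemma cycle_perm2 (u v : T) : u != v -> cycle_perm [:: u; v] = tperm u v.
Proof.
move=> uv; apply/permP => x; rewrite cycle_permE /=; last by rewrite inE uv.
by rewrite /cycle_fun permE /=; case: (eqVneq x u); case: (eqVneq x v).
Qed.
End CyclePerm.

Section MetacyclicSet.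
Variables (gT : finGroupType) (a b : gT) (n u : nat).
Hypotheses (n_gt0 : 0 < n) (a2 : (a ^+ 2 = 1)%g) (bn : (b ^+ n = 1)%g).
Hypothesis ba : (b * a = a * b ^+ u)%g.

Local Open Scope group_scope.

Let M := [set a ^+ i * b ^+ j | i : 'I_2, j : 'I_n].

Lemma mem_metacyclic i j : a ^+ i * b ^+ j \in M.
Proof.
apply/imset2P; exists (Ordinal (ltn_pmod i (isT : 0 < 2))) (Ordinal (ltn_pmod j n_gt0)) => //=.
by rewrite !expg_mod.
Qed.

Lemma conjg_metacyclic i j : (b ^+ j) ^ (a ^+ i) = b ^+ (j * u ^ i).
Proof.
have aV : a^-1 = a by apply/eqP; rewrite eq_invg_mul -expg2 a2.
have b_a : b ^ a = b ^+ u by rewrite conjgE ba -aV mulKg.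
rewrite conjXg mulnC expgM; congr (_ ^+ _); elim: i => [|i IH].
  by rewrite conjg1 expg1.
by rewrite expgSr conjgM IH conjXg b_a -expgM expnS.
Qed.

Lemma group_set_metacyclic : group_set M.
Proof.
apply/group_setP; split; first by rewrite -[1](mulg1 1) -{1}(expg0 a) -(expg0 b) mem_metacyclic.
move=> _ _ /imset2P[i j _ _ ->] /imset2P[i' j' _ _ ->].
rewrite mulgA -(mulgA _ (b ^+ j)) (conjgC (b ^+ j)) conjg_metacyclic.
by rewrite !mulgA -expgD -mulgA -expgD mem_metacyclic.
Qed.
End MetacyclicSet.

Lemma flatten_pairs_iota (T : Type) (f g h : nat -> T) s t p :
  (forall m, t <= m < t + p -> f m = h (s + 2 * (m - t)) /\ g m = h (s + 2 * (m - t)).+1) ->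
  flatten [seq [:: f m; g m] | m <- iota t p] = map h (iota s (2 * p)).
Proof.
elim: p s t => [|p IH] s t fgh; first by rewrite muln0.
rewrite mulnS /=; have [-> ->] : f t = h s /\ g t = h s.+1.
  by have := fgh t; rewrite subnn muln0 addn0; apply; lia.
congr [:: _, _ & _]; apply: IH => m mt.
have -> : s.+2 + 2 * (m - t.+1) = s + 2 * (m - t) by lia.
by apply: fgh; lia.
Qed.

Section CycleEntries.
Variable k : nat.
Hypotheses (k_even : ~~ odd k) (k_gt0 : 0 < k).

Definition C1_at (r : nat) : nat :=
  if r < k then (if odd r then 2 * r + 2 * k - 4 else r)
  else if r < 2 * k - 2 then (if odd r then 2 * r - 2 else r)
  else if r == 2 * k - 2 then 4 * k - 1 else 4 * k - 4.

Definition C2_at (r : nat) : nat :=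
  if r < k then (if odd r then 2 * r + 2 * k - 1 else r.+1)
  else if r < 2 * k - 2 then (if odd r then 2 * r - 3 else r.+1)
  else if r == 2 * k - 2 then 4 * k - 2 else 4 * k - 5.

Definition mate (j : nat) : nat := if odd j then j.-1 else j.+1.

Ltac cases_lia := repeat case: ifP => ?;
  rewrite ?/C1_at ?/C2_at; repeat case: ifP => ?; rewrite ?/mate; repeat case: ifP => ?; lia.

Lemma C1_at_lt r : r < 2 * k -> C1_at r < 4 * k. Proof. move=> ?; cases_lia. Qed.
Lemma C2_at_lt r : r < 2 * k -> C2_at r < 4 * k. Proof. move=> ?; cases_lia. Qed.

Lemma C1_at_inj r r' : r < 2 * k -> r' < 2 * k -> C1_at r = C1_at r' -> r = r'.
Proof. move=> ? ?; cases_lia. Qed.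
Lemma C2_at_inj r r' : r < 2 * k -> r' < 2 * k -> C2_at r = C2_at r' -> r = r'.
Proof. move=> ? ?; cases_lia. Qed.
Lemma C1_at_neq_C2_at r r' : r < 2 * k -> r' < 2 * k -> C1_at r <> C2_at r'.
Proof. move=> ? ?; cases_lia. Qed.

Lemma C1_idxE : C1_idx k = mkseq C1_at (2 * k).
Proof.
rewrite /C1_idx /mkseq.
have -> : 2 * k = 2 * k./2 + (2 * (k./2 - 1) + 2) by lia.
rewrite iotaD iotaD !map_cat; congr (_ ++ _ ++ _).
- by apply: flatten_pairs_iota => m mk; split; cases_lia.
- by apply: flatten_pairs_iota => m mk; split; cases_lia.
- by rewrite /= /C1_at; repeat case: ifP => ?; try lia; congr [:: _; _]; lia.
Qed.

Lemma C2_idxE : C2_idx k = mkseq C2_at (2 * k).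
Proof.
rewrite /C2_idx /mkseq.
have -> : 2 * k = 2 * k./2 + (2 * (k./2 - 1) + 2) by lia.
rewrite iotaD iotaD !map_cat; congr (_ ++ _ ++ _).
- by apply: flatten_pairs_iota => m mk; split; cases_lia.
- by apply: flatten_pairs_iota => m mk; split; cases_lia.
- by rewrite /= /C2_at; repeat case: ifP => ?; try lia; congr [:: _; _]; lia.
Qed.

Lemma mul_k1_mod r : r < 2 * k ->
  (k + 1) * r %% (2 * k) = if odd r then (if r < k then r + k else r - k) else r.
Proof.
move=> r_lt; have r_half := odd_double_half r.
have -> : (k + 1) * r = r./2 * (2 * k) + (r + k * odd r).
  by move: (r ./2) r_half; case: (odd r) => h <-; nia.
rewrite modnMDl; case: (odd r); last by rewrite muln0 addn0 modn_small.
rewrite muln1; case: ltnP => rk; first by rewrite modn_small //; lia.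
by rewrite -(subnK (_ : 2 * k <= r + k)) ?modnDr ?modn_small; lia.
Qed.

Lemma mate_C1_at r : r < 2 * k -> mate (C1_at r) = C2_at ((k + 1) * r %% (2 * k)).
Proof. by move=> r_lt; rewrite mul_k1_mod //; cases_lia. Qed.

Lemma mate_C2_at r : r < 2 * k -> mate (C2_at r) = C1_at ((k + 1) * r %% (2 * k)).
Proof. by move=> r_lt; rewrite mul_k1_mod //; cases_lia. Qed.

Lemma mul_k1K_mod i : (k + 1) * ((k + 1) * i) = i %[mod 2 * k].
Proof.
have k_half := odd_double_half k; rewrite (negbTE k_even) add0n in k_half.
have -> : (k + 1) * ((k + 1) * i) = (k./2 + 1) * i * (2 * k) + i.
  by rewrite -k_half; nia.
by rewrite modnMDl.
Qed.
End CycleEntries.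

Section Labelling.
Variables (F : finFieldType) (cs : seq F) (k : nat).
Hypotheses (k_even : ~~ odd k) (k_gt0 : 0 < k).
Hypotheses (cs_uniq : uniq cs) (size_cs : size cs = 4 * k) (card_F : #|F| = 4 * k).

Local Notation c := (cc cs).
Local Notation a := (perm_a cs k).
Local Notation b := (perm_b cs k).

Let C1_lt := C1_at_lt k_even k_gt0.
Let C2_lt := C2_at_lt k_even k_gt0.
Let C1_inj := C1_at_inj k_even k_gt0.
Let C2_inj := C2_at_inj k_even k_gt0.
Let C12_neq := C1_at_neq_C2_at k_even k_gt0.

Lemma cc_eq i j : i < 4 * k -> j < 4 * k -> (c i == c j) = (i == j).
Proof. by move=> ? ?; rewrite /cc nth_uniq ?size_cs. Qed.

Lemma perm_a_cc j : j < 4 * k -> a (c j) = c (mate j).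
Proof.
have mate_lt i : i < 4 * k -> mate i < 4 * k by rewrite /mate; case: ifP; lia.
suff prod_mate m : m <= 2 * k -> j < 4 * k ->
    (\prod_(i < m) cycle_perm [:: c (2 * i); c (2 * i).+1])%g (c j)
    = c (if j < 2 * m then mate j else j).
  by move=> j_lt; rewrite /perm_a prod_mate // ifT //; lia.
elim: m => [|m IH] m_le j_lt; first by rewrite big_ord0 perm1.
rewrite big_ord_recr permM [nat_of_ord ord_max]/= IH; try lia.
rewrite cycle_perm2 ?cc_eq; try lia.
have [j_m | j_m] := ltnP j (2 * m).
  have mate_m : mate j < 2 * m by rewrite /mate; case: ifP; lia.
  by rewrite ifT 1?tpermD //; rewrite ?cc_eq ?mate_lt; lia.
have [->|j_ne] := eqVneq j (2 * m).
  by rewrite tpermL ifT; [congr c; rewrite /mate; case: ifP |]; lia.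
have [->|j_ne'] := eqVneq j (2 * m).+1.
  by rewrite tpermR ifT; [congr c; rewrite /mate; case: ifP |]; lia.
by rewrite ifF 1?tpermD //; rewrite ?cc_eq; lia.
Qed.

Section CycleOfPositions.
Variable f : nat -> nat.
Hypothesis f_lt : forall r, r < 2 * k -> f r < 4 * k.
Hypothesis f_inj : forall r r', r < 2 * k -> r' < 2 * k -> f r = f r' -> r = r'.

Let C := map c (mkseq f (2 * k)).

Lemma uniq_cycle_positions : uniq C.
Proof.
rewrite map_inj_in_uniq ?map_inj_in_uniq ?iota_uniq //.
  by move=> r r'; rewrite !mem_iota !add0n; apply: f_inj.
move=> _ _ /mapP[r + ->] /mapP[r' + ->]; rewrite !mem_iota !add0n => r_lt r'_lt /eqP.
by rewrite cc_eq ?f_lt // => /eqP.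
Qed.

Lemma cycle_perm_positions r : r < 2 * k ->
  cycle_perm C (c (f r)) = c (f (r.+1 %% (2 * k))).
Proof.
move=> r_lt; have nthC j : j < 2 * k -> nth (c 0) C j = c (f j).
  by move=> j_lt; rewrite (nth_map 0) ?nth_mkseq ?size_mkseq.
have size_C : size C = 2 * k by rewrite size_map size_mkseq.
rewrite -nthC // cycle_perm_nth ?uniq_cycle_positions ?size_C // nthC //.
by rewrite ltn_pmod //; lia.
Qed.

Lemma cycle_perm_positions_notin j : j < 4 * k -> (forall r, r < 2 * k -> f r != j) ->
  cycle_perm C (c j) = c j.
Proof.
move=> j_lt f_ne; rewrite cycle_perm_notin ?uniq_cycle_positions //.
apply/mapP => -[_ /mapP[r + ->] /eqP]; rewrite mem_iota add0n => r_lt.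
by rewrite cc_eq ?f_lt // eq_sym (negbTE (f_ne r r_lt)).
Qed.
End CycleOfPositions.

Definition pt (s : bool) (i : nat) : F :=
  c ((if s then C2_at k else C1_at k) (i %% (2 * k))).

Lemma pt_mod s i : pt s (i %% (2 * k)) = pt s i.
Proof. by rewrite /pt modn_mod. Qed.

Lemma pt_inj s i s' i' : pt s i = pt s' i' -> s = s' /\ i = i' %[mod 2 * k].
Proof.
have r_lt j : j %% (2 * k) < 2 * k by rewrite ltn_pmod //; lia.
move/eqP; rewrite /pt cc_eq; last 2 first.
- by case: s; [apply: C2_lt | apply: C1_lt].
- by case: s'; [apply: C2_lt | apply: C1_lt].
case: s; case: s' => /eqP eq_at.
- by split => //; apply: C2_inj eq_at.
- by case: (C12_neq (r_lt i') (r_lt i)).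
- by case: (C12_neq (r_lt i) (r_lt i')).
- by split => //; apply: C1_inj eq_at.
Qed.

Lemma pt_surj x : exists s i, x = pt s i.
Proof.
pose pt2 (p : bool * 'I_(2 * k)) := pt p.1 p.2.
have pt2_inj : injective pt2.
  move=> [s i] [s' i'] /pt_inj[/= -> i_i']; congr pair; apply: val_inj.
  by move: i_i'; rewrite !modn_small.
have card_le : #|F| <= #|{: bool * 'I_(2 * k)}|.
  by rewrite card_prod card_bool card_ord card_F; lia.
by have /codomP[[s i] ->] := inj_card_onto pt2_inj card_le x; exists s, i.
Qed.

Lemma perm_b_pt s i : b (pt s i) = pt s i.+1.
Proof.
have mod_lt j : j %% (2 * k) < 2 * k by rewrite ltn_pmod //; lia.
rewrite /perm_b /perm_C1 /perm_C2 (C1_idxE k_even k_gt0) (C2_idxE k_even k_gt0) permM /pt.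
have -> : i.+1 %% (2 * k) = (i %% (2 * k)).+1 %% (2 * k).
  by rewrite -[in RHS]addn1 modnDml addn1.
case: s.
- rewrite (cycle_perm_positions_notin C1_lt C1_inj) ?(cycle_perm_positions C2_lt C2_inj) //.
    exact/C2_lt.
  by move=> r r_lt; apply/eqP/C12_neq.
- rewrite (cycle_perm_positions C1_lt C1_inj) ?(cycle_perm_positions_notin C2_lt C2_inj) //.
    exact/C1_lt.
  by move=> r r_lt; apply/eqP => /esym; apply: C12_neq.
Qed.

Lemma perm_a_pt s i : a (pt s i) = pt (~~ s) ((k + 1) * i).
Proof.
have r_lt : i %% (2 * k) < 2 * k by rewrite ltn_pmod //; lia.
rewrite /pt -modnMmr; case: s => /=.
- by rewrite perm_a_cc ?(mate_C2_at k_even k_gt0) ?C2_lt.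
- by rewrite perm_a_cc ?(mate_C1_at k_even k_gt0) ?C1_lt.
Qed.

Lemma pt_congr s i i' : i = i' %[mod 2 * k] -> pt s i = pt s i'.
Proof. by move=> i_i'; rewrite -pt_mod i_i' pt_mod. Qed.

Lemma perm_pt_ext (g h : {perm F}) : (forall s i, g (pt s i) = h (pt s i)) -> g = h.
Proof. by move=> gh; apply/permP => x; have [s [i ->]] := pt_surj x. Qed.

Lemma perm_bX_pt j s i : (b ^+ j)%g (pt s i) = pt s (i + j).
Proof.
elim: j => [|j IH]; first by rewrite expg0 perm1 addn0.
by rewrite expgSr permM IH perm_b_pt addnS.
Qed.

Lemma perm_aXbX_pt e j s i : e < 2 ->
  (a ^+ e * b ^+ j)%g (pt s i) = pt (s (+) odd e) ((k + 1) ^ e * i + j).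
Proof.
case: e => [|[|//]] _; rewrite permM.
  by rewrite expg0 perm1 perm_bX_pt addbF mul1n.
by rewrite expg1 perm_a_pt perm_bX_pt addbT expn1.
Qed.

Lemma perm_a_order : (a ^+ 2 = 1)%g.
Proof.
apply: perm_pt_ext => s i.
rewrite expgS expg1 permM !perm_a_pt negbK perm1.
exact/pt_congr/mul_k1K_mod.
Qed.

Lemma perm_b_order : (b ^+ (2 * k) = 1)%g.
Proof. by apply: perm_pt_ext => s i; rewrite perm_bX_pt perm1; apply/pt_congr/modnDr. Qed.

Lemma perm_b_a : (b * a = a * b ^+ (k + 1))%g.
Proof. by apply: perm_pt_ext => s i; rewrite permM [RHS]permM perm_b_pt !perm_a_pt perm_bX_pt mulnSr. Qed.

Lemma group_set_G1 : group_set (G1 cs k).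
Proof.
apply: group_set_metacyclic perm_a_order perm_b_order perm_b_a; lia.
Qed.

Lemma card_G1 : #|G1 cs k| = 4 * k.
Proof.
pose g (p : 'I_2 * 'I_(2 * k)) := (a ^+ p.1 * b ^+ p.2)%g.
have -> : G1 cs k = g @: setT.
  apply/setP => h; apply/imset2P/imsetP => [[i j _ _ ->] | [[i j] _ ->]].
    by exists (i, j).
  by exists i j.
rewrite card_imset ?cardsT ?card_prod ?card_ord; first lia.
move=> [i j] [i' j'] /permP /(_ (pt false 0)).
rewrite !perm_aXbX_pt ?ltn_ord // !muln0 !add0n => /pt_inj[odd_i j_j'].
have ord2_odd (e : 'I_2) : e = odd e :> nat by case: e => [[|[|]]].
move: j_j'; rewrite !modn_small // => j_j'.
by congr pair; apply: val_inj; rewrite //= ord2_odd; move: odd_i => /= ->; rewrite -ord2_odd.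
Qed.

Lemma G1_fixpoint_free g : g \in G1 cs k -> g != 1%g -> forall x, g x != x.
Proof.
case/imset2P => i j _ _ -> g_ne1 x; have [s [r ->]] := pt_surj x.
rewrite perm_aXbX_pt //; apply/eqP => /pt_inj[].
case: i g_ne1 => [[|[|//]] i_lt] /= g_ne1 s_eq; last by case: s s_eq.
rewrite mul1n -[X in _ = X %[mod _]]addn0 => /eqP; rewrite eqn_modDl mod0n modn_small // => /eqP j0.
by move: g_ne1; rewrite /= j0 expg0 mulg1 eqxx.
Qed.
End Labelling.

Theorem theorem3p1 (F : finFieldType) (cs : seq F) (l k q : nat) :
  2 <= l -> k = 2 ^ l -> q = 4 * k -> #|F| = q ->
  uniq cs -> size cs = q ->
  [/\ group_set (G1 cs k),
      #|G1 cs k| = q &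
      forall g : {perm F}, g \in G1 cs k -> g != 1%g -> forall x : F, g x != x].
Proof.
move=> l_ge2 k_def q_def card_F cs_uniq size_cs; subst q.
have k_gt0 : 0 < k by rewrite k_def expn_gt0.
have k_even : ~~ odd k by rewrite k_def -(subnKC l_ge2) expnS oddM.
split; [exact: group_set_G1 | exact: card_G1 | exact: G1_fixpoint_free].
Qed.
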